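(* For an even $i$, 2Merge requires \[ \lceil\lg(i-1)\rceil + 1 - \frac{2}{p_i} + \frac{1}{3p_i^2} + O(1/i) \] comparisons on average at Step~4.
   Context: $\lg=\log_2$, $p_x = x/2^{\lceil \lg x\rceil}$. RHBS$(A,T)$, $T=(t_1,\dots,t_m)$ sorted: if $m\le 3\cdot 2^{\lceil\lg(m+1)\rceil-2}-1$ let $d=2^{\lceil\lg(m+1)\rceil-2}$, else $d=m-2^{\lceil\lg(m+1)\rceil-1}+1$; compare $A$ with $t_d$ and recurse on the left or right part. 2Merge$(A,B,T)$ with $T=(t_1,\dots,t_{i-2})$ sorted, $i$ even, $i\ge4$: Step 1 compare and swap so $A<B$; Steps 2–3 locate and insert $A$ (comparing $A$ with $t_{\lceil(1-2^{-r/2})i\rceil}$ for $r=1,2,\dots$ and then RHBS in the identified interval); suppose $A$ falls between $t_{\ell}$ and $t_{\ell+1}$. Step 4: insert $B$ into $(t_{\ell+1},\dots,t_{i-2})$ by RHBS. The two inserted elements occupy uniformly random distinct positions among the $i$ positions; given $A<B$, $\mathbf{Pr}[t_{\ell-1}<A<t_\ell]=(i-\ell)/\binom{i}{2}$, and $B$ is uniformly distributed over the positions to the right of $A$. *)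

From mathcomp Require Import all_boot all_order all_algebra.
Set Implicit Arguments. Unset Strict Implicit. Unset Printing Implicit Defensive.
Import Order.TTheory GRing.Theory Num.Theory.

(* ceil(lg n) for n >= 1 : [up_log 2 n] = least e with n <= 2^e. *)
Definition clg (n : nat) : nat := up_log 2 n.

(* RHBS pivot index d for a sorted list of length m >= 1.
   For m = 1 the paper's formula involves 2^(-1); with truncated nat
   exponent the test still yields d = 1, which matches the real formula. *)
Definition rhbs_d (m : nat) : nat :=
  if m <= 3 * 2 ^ (clg m.+1 - 2) - 1 then 2 ^ (clg m.+1 - 2)
  else m - 2 ^ (clg m.+1 - 1) + 1.

(* Number of comparisons made by RHBS inserting an element into a sorted
   list (t_1..t_m) when exactly j of the t's are smaller than it
   (0 <= j <= m).  [fuel] is a structural bound (fuel >= m suffices). *)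
Fixpoint rhbs_cost (fuel m j : nat) : nat :=
  match fuel with
  | 0 => 0
  | fuel'.+1 =>
    if m is 0 then 0 else
    let d := rhbs_d m in
    if j < d then (rhbs_cost fuel' (d - 1) j).+1
    else (rhbs_cost fuel' (m - d) (j - d)).+1
  end.

Definition rhbs_comps (m j : nat) : nat := rhbs_cost m m j.

(* Average number of comparisons at Step 4 of 2Merge for i positions:
   A, B occupy 0-based positions a < b among the i positions, uniformly
   over the binom(i,2) pairs.  Then l = a t's precede A, B is inserted into
   (t_{l+1},...,t_{i-2}) of length i-2-a, with b-1-a of those below B. *)
Definition step4_avg (R : realFieldType) (i : nat) : R :=
  ((\sum_(a < i) \sum_(b < i | (a < b)%N) (rhbs_comps (i - 2 - a) (b - 1 - a))%:R)
    / ('C(i, 2))%:R)%R.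

Definition pfrac (R : realFieldType) (x : nat) : R :=
  (x%:R / (2 ^ clg x)%:R)%R.

From mathcomp Require Import all_boot all_order all_algebra zify ring lra.
Set Implicit Arguments. Unset Strict Implicit. Unset Printing Implicit Defensive.
Import Order.TTheory GRing.Theory Num.Theory.

(* RHBS is an optimal binary search: the pivot splits the L = m + 1 gaps of a
   list of length m so that the decision tree has all its leaves at depths
   clg L - 1 and clg L; summed over all gaps it therefore costs
   (clg L + 1) L - 2 ^ clg L comparisons.  Once A is placed at position a,
   B falls uniformly into the i - 1 - a gaps of the remaining list, so the
   Step 4 total is the sum of these costs over L = 1, ..., i - 1, which has a
   closed form in i and 2 ^ clg (i - 1).  As i - 1 is odd, hence not a power of
   two, 2 ^ clg (i - 1) = 2 ^ clg i = P = i / p_i, and dividing by C(i, 2)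
   leaves the error (P^2 - (3P - 2) i) / (3 (i - 1) i^2), at most 2 / i in
   absolute value because i <= P <= 2 (i - 1). *)

Lemma big_nat_cat_shift (R : Type) (idx : R) (op : Monoid.law idx) d n (F : nat -> R) :
  d <= n ->
  \big[op/idx]_(0 <= j < n) F j =
  op (\big[op/idx]_(0 <= j < d) F j) (\big[op/idx]_(0 <= j < n - d) F (j + d)).
Proof. by move=> le_dn; rewrite (big_cat_nat (leq0n d) le_dn) -{2}[d]add0n big_addn. Qed.

Lemma sum_nat_succ m n (F : nat -> nat) :
  \sum_(m <= j < n) (F j).+1 = \sum_(m <= j < n) F j + (n - m).
Proof.
by under eq_bigr do rewrite -addn1; rewrite big_split sum_nat_const_nat muln1.
Qed.

Lemma big_ord_gt_shift (R : Type) (idx : R) (op : Monoid.law idx) i a (F : nat -> R) :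
  \big[op/idx]_(b < i | a < b) F (b - a.+1) = \big[op/idx]_(j < i - a.+1) F j.
Proof.
transitivity (\big[op/idx]_(a.+1 <= b < i) F (b - a.+1)).
  by rewrite big_geq_mkord; apply: eq_bigl.
by rewrite -{1}[a.+1]add0n big_addn big_mkord; apply: eq_bigr => j _; rewrite addnK.
Qed.

Lemma bin2S_mul2 n : 'C(n.+1, 2) * 2 = n.+1 * n.
Proof. by elim: n => [//|n IH]; rewrite binS bin1 mulnDl IH; lia. Qed.

Lemma clg_expn k : clg (2 ^ k) = k.
Proof. exact: up_expnK. Qed.

Lemma clg_bounds n : 0 < n -> n <= 2 ^ clg n < n.*2.
Proof.
move=> n_gt0; rewrite up_logP //=.
have [n_le1 | n_gt1] := leqP n 1.
  by have -> : n = 1 by lia.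
have := up_log_gtn (isT : 1 < 2) n_gt1; rewrite -/(clg n).
case: (clg n) => [|k] /=; rewrite ?expnS; lia.
Qed.

Lemma clg_succ n : 0 < n -> clg n.+1 = clg n + (n == 2 ^ clg n).
Proof.
move=> n_gt0; have /andP[le_nP lt_P2n] := clg_bounds n_gt0.
have P_gt0 : 0 < 2 ^ clg n by rewrite expn_gt0.
case: eqP => [nP | /eqP neq_nP].
  by rewrite addn1 /clg (@up_log_eq _ (clg n)) // expnS -nP; lia.
case E: (clg n) => [|k] in le_nP lt_P2n neq_nP *; first by lia.
by rewrite addn0 /clg (@up_log_eq _ k) //; rewrite expnS in lt_P2n; lia.
Qed.

(* With f L := (clg L).+1 * L - 2 ^ clg L, the identity reads
   f d + f (L - d) + L = f L; it is stated without truncated subtraction. *)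
Lemma rhbs_d_split m (d := rhbs_d m) (L := m.+1) : 0 < m ->
  [/\ 0 < d, d <= m &
   (clg d).+1 * d + (clg (L - d)).+1 * (L - d) + L + 2 ^ clg L =
   (clg L).+1 * L + 2 ^ clg d + 2 ^ clg (L - d)].
Proof.
move=> m_gt0; rewrite /d /L /rhbs_d.
have /andP[lo hi] := up_log_bounds (isT : 1 < 2) (m_gt0 : 1 < m.+1).
rewrite -/(clg m.+1) in lo hi *; case: (clg m.+1) => [|[|k]] /= in lo hi *.
- by move: hi; rewrite leqNgt ltnS m_gt0.
- by have -> : m = 1 by lia.
rewrite !subSS !subn0; set q := 2 ^ k.
have q_gt0 : 0 < q by rewrite expn_gt0.
have q2 : 2 ^ k.+1 = q.*2 by rewrite expnS mul2n.
have q4 : 2 ^ k.+2 = q.*2.*2 by rewrite !expnS !mul2n.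
rewrite q2 in lo *; rewrite q4 in hi *.
case: ifP => m_small.
- have -> : clg (m.+1 - q) = k.+1 by apply: up_log_eq; rewrite // q2; lia.
  rewrite clg_expn q2; split; lia.
- have -> : m.+1 - (m - q.*2 + 1) = 2 ^ k.+1 by rewrite q2; lia.
  have -> : clg (m - q.*2 + 1) = k.+1 by apply: up_log_eq; rewrite // q2; lia.
  rewrite clg_expn q2; split; lia.
Qed.

Lemma rhbs_cost_sum_rec f m (d := rhbs_d m) : 0 < m -> d <= m ->
  \sum_(0 <= j < m.+1) rhbs_cost f.+1 m j =
  \sum_(0 <= j < d) rhbs_cost f (d - 1) j +
  \sum_(0 <= j < m.+1 - d) rhbs_cost f (m - d) j + m.+1.
Proof.
case: m @d => // m d _ le_dm.
rewrite (big_nat_cat_shift _ _ (leqW le_dm)) /= -/d.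
rewrite [X in X + _](eq_big_nat _ _ (F2 := fun j => (rhbs_cost f (d - 1) j).+1)); last first.
  by move=> j /andP[_ ->].
rewrite [X in _ + X](eq_big_nat _ _ (F2 := fun j => (rhbs_cost f (m.+1 - d) j).+1)); last first.
  by move=> j _; rewrite ltnNge leq_addl addnK.
rewrite !sum_nat_succ; lia.
Qed.

Lemma rhbs_cost_sum f m : m <= f ->
  \sum_(0 <= j < m.+1) rhbs_cost f m j + 2 ^ clg m.+1 = (clg m.+1).+1 * m.+1.
Proof.
elim: f m => [|f IH] [|m] le_mf //; try by rewrite big_nat1 /clg up_log1.
have [d_gt0 le_dm split_eq] := rhbs_d_split (ltn0Sn m).
rewrite rhbs_cost_sum_rec //.
set d := rhbs_d m.+1 in d_gt0 le_dm split_eq *.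
have /IH IHl : d - 1 <= f by lia.
have /IH IHr : m.+1 - d <= f by lia.
rewrite (_ : (d - 1).+1 = d) in IHl; last by lia.
rewrite (_ : (m.+1 - d).+1 = m.+2 - d) in IHr; last by lia.
lia.
Qed.

Definition rhbs_total (m : nat) : nat := \sum_(j < m.+1) rhbs_comps m j.

Lemma rhbs_totalE m : rhbs_total m + 2 ^ clg m.+1 = (clg m.+1).+1 * m.+1.
Proof. by rewrite /rhbs_total /rhbs_comps -(big_mkord xpredT) rhbs_cost_sum. Qed.

Lemma step4_numer n :
  \sum_(a < n.+1) \sum_(b < n.+1 | a < b) rhbs_comps (n.+1 - 2 - a) (b - 1 - a) =
  \sum_(m < n) rhbs_total m.
Proof.
rewrite big_ord_recr /= [X in _ + X]big_pred0 => [|b]; last by rewrite ltnNge -ltnS ltn_ord.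
rewrite addn0 (reindex_inj rev_ord_inj) /=; apply: eq_bigr => a _.
under eq_bigr do rewrite -[_ - 1 - _]subnDA add1n.
have lt_an := ltn_ord a.
rewrite big_ord_gt_shift.
have -> : n.+1 - (n - a.+1).+1 = a.+1 by lia.
by have -> : n.+1 - 2 - (n - a.+1) = a by lia.
Qed.

Lemma sum_rhbs_totalE n : 0 < n ->
  6 * \sum_(m < n) rhbs_total m + 6 * n * 2 ^ clg n + 3 * 2 ^ clg n =
  3 * (clg n).+1 * n * n.+1 + 2 ^ clg n * 2 ^ clg n + 2.
Proof.
elim: n => // n IH _; rewrite big_ord_recr /=.
have := rhbs_totalE n.
have [-> | n_gt0] := posnP n; first by rewrite big_ord0 /clg up_log1; lia.
move: (IH n_gt0); rewrite clg_succ //.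
move: (\sum_(i < n) rhbs_total i) (rhbs_total n) (clg n) => t s k.
case: eqP => [-> | _]; rewrite ?addn1 ?addn0 ?expnS; move: (2 ^ k) => P; lia.
Qed.

Local Open Scope ring_scope.

Lemma step4_avg_sum (R : realFieldType) n :
  step4_avg R n.+1 = (\sum_(m < n) rhbs_total m)%:R / ('C(n.+1, 2))%:R.
Proof. by rewrite /step4_avg; under eq_bigr do rewrite -natr_sum; rewrite -natr_sum step4_numer. Qed.

Lemma step4_error_bound (R : realFieldType) (n P k t c : R) :
  n + 1 <= P <= 2 * n ->
  6 * t + 6 * n * P + 3 * P = 3 * (k + 1) * n * (n + 1) + P * P + 2 ->
  c * 2 = (n + 1) * n ->
  `|t / c - (k + 1 - 2 / ((n + 1) / P) + 1 / (3 * ((n + 1) / P) ^+ 2))| <= 2 / (n + 1).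
Proof.
move=> /andP[le_n1P le_P2n] totalE bin2E.
have n_gt0 : 0 < n by lra.
have n_neq0 : n != 0 by apply/eqP => n0; lra.
have n1_neq0 : n + 1 != 0 by apply/eqP => n10; lra.
have P_neq0 : P != 0 by apply/eqP => P0; lra.
have D_gt0 : 0 < 3 * n * (n + 1) ^+ 2 by rewrite pmulr_rgt0 ?exprn_gt0; lra.
have -> : t / c - (k + 1 - 2 / ((n + 1) / P) + 1 / (3 * ((n + 1) / P) ^+ 2)) =
          (P ^+ 2 - (3 * P - 2) * (n + 1)) / (3 * n * (n + 1) ^+ 2).
  rewrite (_ : t = (3 * (k + 1) * n * (n + 1) + P * P + 2 - 6 * n * P - 3 * P) / 6); last by lra.
  rewrite (_ : c = (n + 1) * n / 2); last by lra.
  by field; rewrite n_neq0 n1_neq0 P_neq0.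
rewrite normf_div (gtr0_norm D_gt0) ler_pdivrMr // ler_norml.
rewrite (_ : 2 / (n + 1) * (3 * n * (n + 1) ^+ 2) = 6 * n * (n + 1)); last by field.
apply/andP; split; nra.
Qed.

Theorem lemma2 (R : realFieldType) :
  exists (K : R) (N : nat), forall i : nat, ~~ odd i -> (N <= i)%N ->
    `| step4_avg R i -
       ((clg (i - 1))%:R + 1 - 2 / pfrac R i + 1 / (3 * pfrac R i ^+ 2)) |
      <= K / i%:R.
Proof.
exists 2, 4%N => -[//|n]; rewrite /= negbK => n_odd i_ge4.
have n_gt0 : (0 < n)%N by lia.
have n_ne_P : n != (2 ^ clg n)%N.
  apply: contraTneq n_odd => ->; rewrite oddX orbF -lt0n up_log_gt0.
  by apply/andP; split => //; lia.
have /andP[le_nP lt_P2n] := clg_bounds n_gt0.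
rewrite step4_avg_sum /pfrac clg_succ // (negbTE n_ne_P) addn0 subn1 /=.
rewrite -[n.+1%:R]natr1; apply: step4_error_bound.
- by rewrite natr1 ler_nat ltn_neqAle n_ne_P le_nP -natrM ler_nat mul2n ltnW.
- have := congr1 (GRing.natmul (1 : R)) (sum_rhbs_totalE n_gt0).
  by rewrite !(natrD, natrM) -[n.+1%:R]natr1 -[(clg n).+1%:R]natr1.
- have := congr1 (GRing.natmul (1 : R)) (bin2S_mul2 n).
  by rewrite !natrM -[n.+1%:R]natr1.
Qed.
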